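(* Let $M$ be a set and let $\mathcal{U}=\{U_1,U_2,\dots\}$ and $\mathcal{B}=\{B_1,B_2,\dots\}$ be two partitions of $M$, each enumerated without repetition by (an initial segment of) the positive integers. Assume only Condition 1 (stated in the context). Let $k\ge 0$ and let $\{x_1,\dots,x_k\}$ be an $S_k$-system with $U_i\cap B_i=\{x_i\}$ for $i\in\{1,\dots,k\}$. Then for every index $t>k$ for which $B_t$ exists, there is an index $s>k$ and an $S_{k+1}$-system $\{y_1,\dots,y_{k+1}\}$ that represents both $U_1,\dots,U_k,U_s$ and $B_1,\dots,B_k,B_t$; that is, each of these $2(k+1)$ sets contains exactly one of the elements $y_1,\dots,y_{k+1}$ (though not necessarily in the same order as the indices).
   Context: A partition of a set $V$ is a collection of nonempty, pairwise disjoint subsets of $V$ whose union is $V$. Condition 1 (two-sided): for no $k\in\mathbb{N}$ do there exist $k-1$ elements of $\mathcal{U}$ whose union contains $k$ distinct elements of $\mathcal{B}$. Likewise, for no $k\in\mathbb{N}$ do there exist $k-1$ elements of $\mathcal{B}$ whose union contains $k$ distinct elements of $\mathcal{U}$. An $S_k$-system is a set $\{x_1,\dots,x_k\}$ of $k$ elements of $M$ such that no element of $\mathcal{U}$ and no element of $\mathcal{B}$ contains two of them. *)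

From Stdlib Require Import Arith List.
Import ListNotations.
Set Implicit Arguments.

(* An enumerated partition of M: block i is [P i : M -> Prop], the set of
   valid indices is [I], an initial segment of the positive integers
   (finite or all of them).  Blocks are nonempty, pairwise disjoint (hence
   the enumeration is without repetition) and cover M. *)
Definition is_enum_partition (M : Type) (P : nat -> M -> Prop) (I : nat -> Prop) : Prop :=
  (forall i, I i -> 1 <= i) /\
  (forall i j, 1 <= i -> i <= j -> I j -> I i) /\
  (forall i, I i -> exists x, P i x) /\
  (forall i j x, I i -> I j -> P i x -> P j x -> i = j) /\
  (forall x, exists i, I i /\ P i x).

(* One side of Condition 1: there are no k-1 (here: n) distinct blocks of the
   first partition whose union contains k (here: n+1) distinct blocks of the
   second.  (k ranges over N = {1,2,...}, i.e. k = n+1 with n >= 0.) *)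
Definition no_overcover (M : Type) (U : nat -> M -> Prop) (IU : nat -> Prop)
    (B : nat -> M -> Prop) (IB : nat -> Prop) : Prop :=
  forall n : nat, ~ exists (SU SB : list nat),
    NoDup SU /\ length SU = n /\ (forall i, In i SU -> IU i) /\
    NoDup SB /\ length SB = S n /\ (forall j, In j SB -> IB j) /\
    (forall j, In j SB -> forall x, B j x -> exists i, In i SU /\ U i x).

Definition Condition1 (M : Type) (U : nat -> M -> Prop) (IU : nat -> Prop)
    (B : nat -> M -> Prop) (IB : nat -> Prop) : Prop :=
  no_overcover U IU B IB /\ no_overcover B IB U IU.

Definition S_system (M : Type) (U : nat -> M -> Prop) (IU : nat -> Prop)
    (B : nat -> M -> Prop) (IB : nat -> Prop) (k : nat) (y : nat -> M) : Prop :=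
  (forall a b, 1 <= a <= k -> 1 <= b <= k -> y a = y b -> a = b) /\
  (forall i, IU i -> forall a b, 1 <= a <= k -> 1 <= b <= k ->
       U i (y a) -> U i (y b) -> a = b) /\
  (forall i, IB i -> forall a b, 1 <= a <= k -> 1 <= b <= k ->
       B i (y a) -> B i (y b) -> a = b).

Definition contains_exactly_one (M : Type) (k : nat) (y : nat -> M) (X : M -> Prop) : Prop :=
  exists a, 1 <= a <= k /\ X (y a) /\ (forall b, 1 <= b <= k -> X (y b) -> b = a).

From Stdlib Require Import Arith List Lia Classical.
Import ListNotations.
Set Implicit Arguments.

(* Proof idea: an augmenting-path argument, as for Hall's theorem.
   Call a family y_1..y_k a "matching missing B_j" if y_a lies in U_a, the
   y_a lie in pairwise distinct B-blocks, B_j contains none of them, and every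
   other target block B_i (i <= k or i = t) contains one of them.  Initially
   x is a matching missing B_t.  An alternating path from B_t enters U_l
   (l <= k) through an element e of B_j /\ U_l, where B_j is the end of the
   path so far; exchanging y_l for e turns a matching missing B_j into one
   missing B_l.  Along a repetition-free path these exchanges compose, so at
   the end B_j of any path we have a matching missing B_j; if B_j meets some
   U_s with s > k, the meeting point is a (k+1)-st element completing an
   S_{k+1}-system.  If no path reaches such a U_s, then for the set L of
   path-reachable l <= k the |L|+1 blocks B_t, B_l (l in L) are covered by
   the |L| blocks U_l (l in L), which the first half of Condition 1 forbids. *)

Definition upd (M : Type) (y : nat -> M) (l : nat) (e : M) : nat -> M :=
  fun a => if Nat.eq_dec a l then e else y a.

Lemma upd_at (M : Type) (y : nat -> M) l e : upd y l e l = e.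
Proof. unfold upd; destruct (Nat.eq_dec l l); congruence. Qed.

Lemma upd_other (M : Type) (y : nat -> M) l e a : a <> l -> upd y l e a = y a.
Proof. intros Hal; unfold upd; destruct (Nat.eq_dec a l); congruence. Qed.

Lemma finite_listing (P : nat -> Prop) (n : nat) :
  exists L, NoDup L /\ forall i, In i L <-> 1 <= i <= n /\ P i.
Proof.
  induction n as [|n (L & Hnd & HL)].
  - exists []; split; [constructor | simpl; lia].
  - destruct (classic (P (S n))) as [HP | HnP].
    + exists (S n :: L); split.
      * constructor; [rewrite HL; lia | exact Hnd].
      * intros i; simpl; rewrite HL; split.
        -- intros [<- | [Hi HPi]]; split; auto; lia.
        -- intros [Hi HPi]; destruct (Nat.eq_dec i (S n)); [left | right; split]; auto; lia.
    + exists L; split; [exact Hnd |].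
      intros i; rewrite HL; split; [intros []; split; auto; lia |].
      intros [Hi HPi]; destruct (Nat.eq_dec i (S n)) as [-> | ]; [contradiction |].
      split; auto; lia.
Qed.

Section Separated.
Variables (M : Type) (P : nat -> M -> Prop) (I : nat -> Prop).

Lemma block_unique : is_enum_partition P I ->
  forall i j z, I i -> I j -> P i z -> P j z -> i = j.
Proof. intros (_ & _ & _ & Hdisj & _); exact Hdisj. Qed.

Definition separated (n : nat) (y : nat -> M) : Prop :=
  forall i, I i -> forall a b, 1 <= a <= n -> 1 <= b <= n ->
    P i (y a) -> P i (y b) -> a = b.

Lemma separated_of_labels (n : nat) (y : nat -> M) :
  is_enum_partition P I ->
  (forall a, 1 <= a <= n -> I a /\ P a (y a)) -> separated n y.
Proof.
  intros hP Hlab i Hi a b Ha Hb Hia Hib.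
  destruct (Hlab a Ha) as [HIa Haa], (Hlab b Hb) as [HIb Hbb].
  transitivity i; [symmetry |].
  - exact (block_unique hP Hi HIa Hia Haa).
  - exact (block_unique hP Hi HIb Hib Hbb).
Qed.

Lemma separated_replace (n : nat) (y : nat -> M) (l : nat) (e : M) :
  separated n y ->
  (forall i, I i -> P i e -> forall a, 1 <= a <= n -> a <> l -> ~ P i (y a)) ->
  separated n (upd y l e).
Proof.
  intros Hsep Hnew i Hi a b Ha Hb.
  destruct (Nat.eq_dec a l) as [-> | Hal], (Nat.eq_dec b l) as [-> | Hbl];
    rewrite ?upd_at, ?upd_other by assumption; intros H1 H2; auto.
  - destruct (Hnew i Hi H1 b Hb Hbl H2).
  - destruct (Hnew i Hi H2 a Ha Hal H1).
  - exact (Hsep i Hi a b Ha Hb H1 H2).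
Qed.

Lemma separated_extend (n : nat) (y : nat -> M) (e : M) :
  separated n y ->
  (forall i, I i -> P i e -> forall a, 1 <= a <= n -> ~ P i (y a)) ->
  separated (S n) (upd y (S n) e).
Proof.
  intros Hsep Hnew i Hi a b Ha Hb.
  destruct (Nat.eq_dec a (S n)) as [-> | Hal], (Nat.eq_dec b (S n)) as [-> | Hbl];
    rewrite ?upd_at, ?upd_other by assumption; intros H1 H2; auto.
  - destruct (Hnew i Hi H1 b ltac:(lia) H2).
  - destruct (Hnew i Hi H2 a ltac:(lia) H1).
  - apply (Hsep i Hi a b); auto; lia.
Qed.

Lemma exactly_one_of_separated (n : nat) (y : nat -> M) (i a : nat) :
  separated n y -> I i -> 1 <= a <= n -> P i (y a) ->
  contains_exactly_one n y (P i).
Proof.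
  intros Hsep Hi Ha Hia; exists a; split; [exact Ha | split; [exact Hia |]].
  intros b Hb Hib; exact (Hsep i Hi b a Hb Ha Hib Hia).
Qed.

End Separated.

(* Separation by both partitions makes an S_n-system: distinctness follows
   because every element lies in some U-block. *)
Lemma S_system_of_separated (M : Type) (U : nat -> M -> Prop) (IU : nat -> Prop)
    (B : nat -> M -> Prop) (IB : nat -> Prop) (n : nat) (y : nat -> M) :
  is_enum_partition U IU -> separated U IU n y -> separated B IB n y ->
  S_system U IU B IB n y.
Proof.
  intros (_ & _ & _ & _ & Hcov) HsepU HsepB; split; [| split]; auto.
  intros a b Ha Hb Hab; destruct (Hcov (y a)) as (i & Hi & Hia).
  apply (HsepU i Hi a b Ha Hb Hia); rewrite <- Hab; exact Hia.
Qed.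

Section Augmentation.
Variables (M : Type) (U : nat -> M -> Prop) (IU : nat -> Prop)
  (B : nat -> M -> Prop) (IB : nat -> Prop).
Hypothesis hU : is_enum_partition U IU.
Hypothesis hB : is_enum_partition B IB.
Variables (k : nat) (x : nat -> M).
Hypothesis hidx : forall i, 1 <= i <= k -> IU i /\ IB i.
Hypothesis hxsep : separated B IB k x.
Hypothesis hxdiag : forall a, 1 <= a <= k -> U a (x a) /\ B a (x a).
Variable t : nat.
Hypothesis ht : k < t.
Hypothesis hIBt : IB t.

Definition target (i : nat) : Prop := 1 <= i <= k \/ i = t.

Lemma target_IB (i : nat) : target i -> IB i.
Proof. intros [Hi | ->]; [apply hidx |]; auto. Qed.

Definition matching_missing (j : nat) (y : nat -> M) : Prop :=
  (forall a, 1 <= a <= k -> U a (y a)) /\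
  separated B IB k y /\
  (forall a, 1 <= a <= k -> ~ B j (y a)) /\
  (forall i, target i -> i <> j -> exists a, 1 <= a <= k /\ B i (y a)).

Lemma matching_initial : matching_missing t x.
Proof.
  split; [| split; [exact hxsep | split]].
  - intros a Ha; apply hxdiag, Ha.
  - intros a Ha Hta.
    assert (t = a) by (eapply block_unique; eauto; [apply hidx | apply hxdiag]; auto).
    lia.
  - intros i [Hi | ->] Hit; [exists i; split; [| apply hxdiag] |]; auto; lia.
Qed.

Lemma matching_exchange (j l : nat) (y : nat -> M) (e : M) :
  target j -> matching_missing j y -> 1 <= l <= k -> l <> j ->
  B l (y l) -> B j e -> U l e -> matching_missing l (upd y l e).
Proof.
  intros Htj (Hlab & Hsep & Hfree & Hcov) Hl Hlj Hyl Hje Hle.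
  assert (HIBl : IB l) by (apply hidx, Hl).
  assert (Hblock_e : forall i, IB i -> B i e -> i = j)
    by (intros i Hi Hie; eapply block_unique; eauto using target_IB).
  split; [| split; [| split]].
  - intros a Ha; destruct (Nat.eq_dec a l) as [-> | Hal];
      rewrite ?upd_at, ?upd_other; auto.
  - apply separated_replace; [exact Hsep |].
    intros i Hi Hie a Ha _; rewrite (Hblock_e i Hi Hie); apply Hfree, Ha.
  - intros a Ha; destruct (Nat.eq_dec a l) as [-> | Hal];
      rewrite ?upd_at, ?upd_other by assumption; intros Hla.
    + apply Hlj, Hblock_e; auto.
    + apply Hal, (Hsep l HIBl a l); auto.
  - intros i Hti Hil; destruct (Nat.eq_dec i j) as [-> | Hij].
    + exists l; rewrite upd_at; auto.
    + destruct (Hcov i Hti Hij) as (a & Ha & Hia); exists a; split; [exact Ha |].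
      rewrite upd_other; [exact Hia | intros ->].
      apply Hil; eapply block_unique; eauto using target_IB.
Qed.

Lemma matching_extend (j s : nat) (y : nat -> M) (e : M) :
  target j -> matching_missing j y -> k < s -> IU s -> B j e -> U s e ->
  exists s, k < s /\ IU s /\
    exists y : nat -> M, S_system U IU B IB (S k) y /\
      (forall i, (1 <= i <= k \/ i = s) -> contains_exactly_one (S k) y (U i)) /\
      (forall i, (1 <= i <= k \/ i = t) -> contains_exactly_one (S k) y (B i)).
Proof.
  intros Htj (Hlab & Hsep & Hfree & Hcov) Hs HIUs Hje Hse.
  assert (HsepU : separated U IU (S k) (upd y (S k) e)).
  { apply separated_extend.
    - apply separated_of_labels; [exact hU |].
      intros a Ha; split; [apply hidx | apply Hlab]; exact Ha.
    - intros i Hi Hie a Ha Hia.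
      pose proof (block_unique hU _ _ _ Hi HIUs Hie Hse).
      pose proof (block_unique hU _ _ _ Hi (proj1 (hidx Ha)) Hia (Hlab a Ha)).
      lia. }
  assert (HsepB : separated B IB (S k) (upd y (S k) e)).
  { apply separated_extend; [exact Hsep |].
    intros i Hi Hie a Ha Hia.
    rewrite (block_unique hB _ _ _ Hi (target_IB Htj) Hie Hje) in Hia.
    exact (Hfree a Ha Hia). }
  exists s; split; [exact Hs | split; [exact HIUs |]].
  exists (upd y (S k) e); split; [apply S_system_of_separated; auto | split].
  - intros i [Hi | ->].
    + apply exactly_one_of_separated with (I := IU) (a := i);
        [exact HsepU | apply hidx, Hi | lia |].
      rewrite upd_other by lia; apply Hlab, Hi.
    + apply exactly_one_of_separated with (I := IU) (a := S k); [exact HsepU | exact HIUs | lia |].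
      rewrite upd_at; exact Hse.
  - intros i Hti; destruct (Nat.eq_dec i j) as [-> | Hij].
    + apply exactly_one_of_separated with (I := IB) (a := S k);
        [exact HsepB | exact (target_IB Hti) | lia |].
      rewrite upd_at; exact Hje.
    + destruct (Hcov i Hti Hij) as (a & Ha & Hia).
      apply exactly_one_of_separated with (I := IB) (a := a);
        [exact HsepB | exact (target_IB Hti) | lia |].
      rewrite upd_other by lia; exact Hia.
Qed.

(* Alternating paths from B_t: [alt_path p j] says the U-blocks entered so
   far are listed in p (most recent first) and the path now stands at B_j. *)
Inductive alt_path : list nat -> nat -> Prop :=
  | alt_nil : alt_path [] t
  | alt_cons : forall p j l e,
      alt_path p j -> 1 <= l <= k -> B j e -> U l e -> alt_path (l :: p) l.

Lemma alt_path_range (p : list nat) (j : nat) :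
  alt_path p j -> forall a, In a p -> 1 <= a <= k.
Proof. induction 1; simpl; intros a Ha; [contradiction | destruct Ha; subst; auto]. Qed.

Lemma alt_path_end (p : list nat) (j : nat) : alt_path p j -> j = t \/ In j p.
Proof. induction 1; simpl; auto. Qed.

Lemma alt_path_target (p : list nat) (j : nat) : alt_path p j -> target j.
Proof.
  intros Hp; destruct (alt_path_end Hp) as [-> | Hj]; [right; reflexivity |].
  left; exact (alt_path_range Hp j Hj).
Qed.

Lemma alt_path_suffix (q : list nat) (j : nat) :
  alt_path q j -> forall l, In l q -> exists r pre, alt_path (l :: r) l /\ q = pre ++ l :: r.
Proof.
  induction 1 as [| p j l' e Hp IH Hl Hje Hle]; simpl; intros l Hin; [contradiction |].
  destruct Hin as [<- | Hin].
  - exists p, []; split; [econstructor; eauto | reflexivity].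
  - destruct (IH l Hin) as (r & pre & Hr & ->).
    exists r, (l' :: pre); split; [exact Hr | reflexivity].
Qed.

Lemma alt_path_simple (p : list nat) (j : nat) :
  alt_path p j -> exists q, alt_path q j /\ NoDup q.
Proof.
  induction 1 as [| p j l e Hp (q & Hq & Hnd) Hl Hje Hle].
  - exists []; split; constructor.
  - destruct (classic (In l q)) as [Hin | Hnin].
    + destruct (alt_path_suffix Hq l Hin) as (r & pre & Hr & ->).
      exists (l :: r); split; [exact Hr | exact (NoDup_app_remove_l _ _ Hnd)].
    + exists (l :: q); split; [econstructor; eauto | constructor; auto].
Qed.

(* Exchanging along a repetition-free path; entries off the path are untouched,
   so each new entry still finds its B-block occupied by its old element. *)
Lemma alt_path_matching (p : list nat) (j : nat) :
  alt_path p j -> NoDup p ->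
  exists y, matching_missing j y /\ forall a, 1 <= a <= k -> ~ In a p -> B a (y a).
Proof.
  induction 1 as [| p j l e Hp IH Hl Hje Hle]; intros Hnd.
  - exists x; split; [exact matching_initial | intros a Ha _; apply hxdiag, Ha].
  - inversion Hnd as [| ? ? Hlp Hndp]; subst.
    destruct (IH Hndp) as (y & Hy & Hrest).
    assert (Hlj : l <> j).
    { intros ->; destruct (alt_path_end Hp) as [-> | Hj]; [lia | contradiction]. }
    exists (upd y l e); split.
    + exact (matching_exchange (alt_path_target Hp) Hy Hl Hlj (Hrest l Hl Hlp) Hje Hle).
    + intros a Ha Hnin; simpl in Hnin.
      rewrite upd_other by (intros ->; tauto); apply Hrest; tauto.
Qed.

Lemma alt_path_exit :
  no_overcover U IU B IB ->
  exists p j e s, alt_path p j /\ k < s /\ IU s /\ B j e /\ U s e.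
Proof.
  intros hC; apply NNPP; intros Hstuck.
  destruct (finite_listing (fun l => exists p, alt_path p l) k) as (L & HndL & HL).
  apply (hC (length L)); exists L, (t :: L).
  split; [exact HndL | split; [reflexivity | split; [| split; [| split; [reflexivity | split]]]]].
  - intros i Hi; apply hidx, HL, Hi.
  - constructor; [rewrite HL; lia | exact HndL].
  - intros j [<- | Hj]; [exact hIBt | apply hidx, HL, Hj].
  - intros j Hj z Hjz.
    assert (Hpj : exists p, alt_path p j)
      by (destruct Hj as [<- | Hj]; [exists []; constructor | apply HL, Hj]).
    destruct Hpj as (p & Hp).
    destruct hU as (Hpos & _ & _ & _ & Hcov).
    destruct (Hcov z) as (i & HIi & Hiz).
    pose proof (Hpos i HIi) as Hi1.
    destruct (le_lt_dec i k) as [Hik | Hki].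
    + exists i; split; [| exact Hiz].
      apply HL; split; [lia |].
      exists (i :: p); econstructor; eauto; lia.
    + exfalso; apply Hstuck; exists p, j, z, i; auto.
Qed.

End Augmentation.

Theorem mainTheorem1 (M : Type) (U : nat -> M -> Prop) (IU : nat -> Prop)
    (B : nat -> M -> Prop) (IB : nat -> Prop)
    (hU : is_enum_partition U IU) (hB : is_enum_partition B IB)
    (hC : Condition1 U IU B IB)
    (k : nat) (x : nat -> M)
    (hidx : forall i, 1 <= i <= k -> IU i /\ IB i)
    (hx : S_system U IU B IB k x)
    (hdiag : forall i, 1 <= i <= k -> forall z, (U i z /\ B i z) <-> z = x i) :
  forall t, k < t -> IB t ->
    exists s, k < s /\ IU s /\
      exists y : nat -> M, S_system U IU B IB (S k) y /\
        (forall i, (1 <= i <= k \/ i = s) -> contains_exactly_one (S k) y (U i)) /\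
        (forall i, (1 <= i <= k \/ i = t) -> contains_exactly_one (S k) y (B i)).
Proof.
  intros t ht hIBt.
  destruct hx as (_ & _ & hxsep).
  assert (hxdiag : forall a, 1 <= a <= k -> U a (x a) /\ B a (x a))
    by (intros a Ha; apply (hdiag a Ha); reflexivity).
  destruct hC as [hCU _].
  destruct (alt_path_exit hU hidx ht hIBt hCU) as (p & j & e & s & Hp & Hs & HIUs & Hje & Hse).
  destruct (alt_path_simple Hp) as (q & Hq & Hnd).
  destruct (alt_path_matching IU hB hidx hxsep hxdiag ht hIBt Hq Hnd) as (y & Hy & _).
  exact (matching_extend hU hB hidx ht hIBt e (alt_path_target Hq) Hy Hs HIUs Hje Hse).
Qed.
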